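(* Let $n\ge 3$ and consider the cycle graph on nodes $1,\dots,n$ with measurements $\widetilde{R}_{12},\widetilde{R}_{23},\dots,\widetilde{R}_{n-1,n},\widetilde{R}_{n1}\in\mathrm{SO}(3)$, and suppose all these measurements lie in a common one-parameter subgroup of $\mathrm{SO}(3)$, i.e. they are all rotations about a common axis. Let $E$ be the cycle error and $E_0,\dots,E_{n-1}$ its $n$-th roots as defined in the context. Then for each $k\in\{0,\dots,n-1\}$, the point $R=(R_1,\dots,R_n)\in\mathrm{SO}(3)^n$ given by $R_1=I_3$ and $$R_i=\Big(\prod_{s=1}^{i-1}\widetilde{R}_{s,s+1}\Big)^{\top}E_k^{\,i-1},\qquad i\in\{2,\dots,n\},$$ (the product taken from left to right, i.e. $\widetilde{R}_{12}\widetilde{R}_{23}\cdots\widetilde{R}_{i-1,i}$) is a stationary point of the problem $\min_{R\in\mathrm{SO}(3)^n} f(R)$.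
   Context: Cycle-graph rotation averaging setup. Let $n\ge 3$. The cycle graph has nodes $1,\dots,n$ and edges $\{i,i+1\}$ for $i=1,\dots,n-1$ together with $\{n,1\}$; write $i\sim j$ if $\{i,j\}$ is an edge. Each edge carries a measured rotation $\widetilde{R}_{ij}\in\mathrm{SO}(3)$, with the convention $\widetilde{R}_{ji}=\widetilde{R}_{ij}^\top$. Define the symmetric $3n\times 3n$ block matrix $\widetilde{R}$ whose $(i,j)$ $3\times3$ block is $I_3$ if $i=j$, $\widetilde{R}_{ij}$ if $i\sim j$, and $0$ otherwise. For $R=(R_1,\dots,R_n)\in\mathrm{SO}(3)^n$, write $R=[R_1^\top\ \cdots\ R_n^\top]^\top\in\mathbb{R}^{3n\times 3}$ and define $f(R):=-\operatorname{Tr}(R^\top\widetilde{R}R)$; the rotation averaging problem is to minimize $f$ over $\mathrm{SO}(3)^n$ (equivalently, maximize $\sum_{i\sim j}\operatorname{Tr}(R_i^\top\widetilde{R}_{ij}R_j)$). The cycle error is $E:=\widetilde{R}_{12}\widetilde{R}_{23}\cdots\widetilde{R}_{n-1,n}\widetilde{R}_{n1}\in\mathrm{SO}(3)$. Write $E=\exp(\gamma[\hat n]_\times)$ with unit axis $\hat n$ and angle $\gamma=\angle(E)\in[-\pi,\pi]$, where $[\hat n]_\times$ is the skew-symmetric cross-product matrix. For $k\in\{0,\dots,n-1\}$, $E_k:=\exp\big((\gamma/n-2k\pi/n)[\hat n]_\times\big)$, so that $E_k^n=E$ and $\angle(E_k)=\gamma/n-2k\pi/n$; $\{E_0,\dots,E_{n-1}\}$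 is the set of $n$-th roots of $E$. *)

From HB Require Import structures.
From mathcomp Require Import all_boot all_order all_algebra.
From mathcomp Require Import all_classical all_reals all_analysis.
Set Implicit Arguments. Unset Strict Implicit. Unset Printing Implicit Defensive.
Import Order.TTheory GRing.Theory Num.Theory.
Import numFieldNormedType.Exports.
Local Open Scope ring_scope.

Section Defs.
Variable R : realType.

Definition is_SO3 (M : 'M[R]_3) : Prop := M^T *m M = 1%:M /\ \det M = 1.

Definition unit_vec (u : 'rV[R]_3) : Prop :=
  u 0 0 ^+ 2 + u 0 1 ^+ 2 + u 0 2 ^+ 2 = 1.

Definition crossmx (u : 'rV[R]_3) : 'M[R]_3 :=
  \matrix_(a < 3, b < 3)
    (let x := u 0 0 in let y := u 0 1 in let z := u 0 2 in
     match nat_of_ord a, nat_of_ord b with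
     | 0%N, 1%N => - z | 0%N, 2%N => y
     | 1%N, 0%N => z   | 1%N, 2%N => - x
     | 2%N, 0%N => - y | 2%N, 1%N => x
     | _, _ => 0 end).

(* exp(theta [u]_x) for a unit axis u (Rodrigues' closed form) *)
Definition rotexp (u : 'rV[R]_3) (theta : R) : 'M[R]_3 :=
  1%:M + sin theta *: crossmx u + (1 - cos theta) *: (crossmx u *m crossmx u).

(* Measurements on the cycle, 0-indexed: Rt s = R~_{s+1,s+2} for s < n-1,
   and Rt (n-1) = R~_{n,1}.  Nodes are 0,...,n-1. *)

(* (i,j) 3x3 block of the 3n x 3n matrix R~ *)
Definition Rblock (n : nat) (Rt : nat -> 'M[R]_3) (i j : nat) : 'M[R]_3 :=
  if i == j then 1%:M
  else if j == (i.+1 %% n)%N then Rt i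
  else if i == (j.+1 %% n)%N then (Rt j)^T
  else 0.

(* f(R) = - Tr(R^T R~ R), written blockwise *)
Definition fcost (n : nat) (Rt : nat -> 'M[R]_3) (X : nat -> 'M[R]_3) : R :=
  - \sum_(i < n) \sum_(j < n) \tr ((X i)^T *m Rblock n Rt i j *m X j).

Definition cycle_error (n : nat) (Rt : nat -> 'M[R]_3) : 'M[R]_3 :=
  \prod_(0 <= s < n) Rt s.

Definition Eroot (n : nat) (nh : 'rV[R]_3) (gamma : R) (k : nat) : 'M[R]_3 :=
  rotexp nh (gamma / n%:R - 2 * k%:R * pi / n%:R).

(* candidate point: node i (0-indexed) gets (R~_12 ... R~_{i,i+1})^T E^i;
   node 0 gets the identity (empty product, E^0). *)
Definition cand (Rt : nat -> 'M[R]_3) (E : 'M[R]_3) (i : nat) : 'M[R]_3 :=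
  (\prod_(0 <= s < i) Rt s)^T *m E ^+ i.

Definition stationary (n : nat) (Rt : nat -> 'M[R]_3) (X : nat -> 'M[R]_3) : Prop :=
  (forall i, (i < n)%N -> is_SO3 (X i)) /\
  forall c : nat -> R -> 'M[R]_3,
    (forall i, (i < n)%N -> forall t, is_SO3 (c i t)) ->
    (forall i, (i < n)%N -> c i 0 = X i) ->
    (forall i (a b : 'I_3), (i < n)%N -> derivable (fun t : R => c i t a b) 0 1) ->
    is_derive (0 : R) (1 : R) (fun t : R => fcost n Rt (fun i => c i t)) 0.

End Defs.

From HB Require Import structures.
From mathcomp Require Import all_boot all_order all_algebra.
From mathcomp Require Import all_classical all_reals all_analysis.
From mathcomp Require Import ring lra zify.
Import Order.TTheory GRing.Theory Num.Theory.
Import numFieldNormedType.Exports.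
Set Implicit Arguments. Unset Strict Implicit. Unset Printing Implicit Defensive.
Local Open Scope ring_scope.

(* Let E := E_k, so that E is a rotation with E^n equal to the cycle error.
   The candidate point X is a "gauge transformation" that turns every edge
   measurement into E: X_i^T R~_{i,i+1} X_{i+1} = E on every edge of the cycle
   (the closing edge uses E^n = R~_12 ... R~_n1).  Hence the blocks
   X_i^T R~_ij X_j form the block matrix G of the cycle with all edges equal
   to E, whose every block row and block column sums to the symmetric matrix
   S = I + E + E^T.  A tangent vector to SO(3)^n at X has the form
   (X_i W_i)_i with W_i skew-symmetric, and the derivative of f in that
   direction is - sum_ij tr(W_i^T G_ij + G_ij W_j) = - sum_i tr(W_i^T S)
   - sum_j tr(S W_j) = 0, since a symmetric and a skew matrix are
   trace-orthogonal.  Notice that the argument never uses that the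
   measurements share an axis: only E_k^n = E matters. *)

Section Rotations.
Variable R : realType.
Implicit Types (A B M : 'M[R]_3) (u : 'rV[R]_3).

Lemma SO3_1 : is_SO3 (1%:M : 'M[R]_3).
Proof. by split; rewrite ?trmx1 ?mulmx1 ?det1. Qed.

Lemma SO3_mul A B : is_SO3 A -> is_SO3 B -> is_SO3 (A *m B).
Proof.
move=> [hA dA] [hB dB]; split; last by rewrite det_mulmx dA dB mulr1.
by rewrite trmx_mul mulmxA -(mulmxA B^T) hA mulmx1 hB.
Qed.

(* A one-sided inverse of a square matrix is two-sided. *)
Lemma SO3_rinv A : is_SO3 A -> A *m A^T = 1%:M.
Proof. by move=> [hA _]; apply: mulmx1C. Qed.

Lemma SO3_tr A : is_SO3 A -> is_SO3 A^T.
Proof.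
move=> hA; split; first by rewrite trmxK; exact: SO3_rinv.
by rewrite det_tr; case: hA.
Qed.

Lemma SO3_X A m : is_SO3 A -> is_SO3 (A ^+ m).
Proof.
move=> hA; elim: m => [|m IH]; first by rewrite expr0; exact: SO3_1.
by rewrite exprS; apply: SO3_mul.
Qed.

Lemma SO3_prod (F : nat -> 'M[R]_3) m : (forall s, (s < m)%N -> is_SO3 (F s)) ->
  is_SO3 (\prod_(0 <= s < m) F s).
Proof.
elim: m => [|m IH] hF; first by rewrite big_geq //; exact: SO3_1.
rewrite big_nat_recr //=; apply: SO3_mul; last exact: hF.
by apply: IH => s hs; apply: hF; apply: ltn_trans hs _.
Qed.

Lemma orth_det_sqr M : M^T *m M = 1%:M -> \det M ^+ 2 = 1.
Proof. by move=> h; rewrite expr2 -{1}det_tr -det_mulmx h det1. Qed.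

Lemma crossmx_tr u : (crossmx u)^T = - crossmx u.
Proof.
apply/matrixP => a b; rewrite !mxE.
case: a => [[|[|[|?]]] ?] //; case: b => [[|[|[|?]]] ?] //=.
all: by rewrite ?opprK ?oppr0.
Qed.

Lemma crossmx_cube u : unit_vec u ->
  crossmx u *m crossmx u *m crossmx u = - crossmx u.
Proof.
rewrite /unit_vec => hu.
suff -> : crossmx u *m crossmx u *m crossmx u =
  - ((u 0 0 ^+ 2 + u 0 1 ^+ 2 + u 0 2 ^+ 2) *: crossmx u) by rewrite hu scale1r.
apply/matrixP => a b; rewrite !(mxE, big_ord_recr, big_ord0) /=.
by case: a => [[|[|[|?]]] ?] //; case: b => [[|[|[|?]]] ?] //=; ring.
Qed.

Lemma rotexpD u a b : unit_vec u ->
  rotexp u a *m rotexp u b = rotexp u (a + b).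
Proof.
move=> hu; rewrite /rotexp; have K3 := crossmx_cube hu.
move: K3; set K := crossmx u => K3.
have K3' : K *m (K *m K) = - K by rewrite mulmxA K3.
have K4 : K *m K *m (K *m K) = - (K *m K) by rewrite mulmxA K3 mulNmx.
rewrite !mulmxDl !mulmxDr !mul1mx !mulmx1 -!scalemxAl -!scalemxAr !scalerA.
rewrite K3 K3' K4 !scalerN sinD cosD.
by clearbody K; apply/matrixP => i j; rewrite !mxE; ring.
Qed.

Lemma rotexp0 u : rotexp u 0 = 1%:M.
Proof. by rewrite /rotexp sin0 cos0 subrr !scale0r !addr0. Qed.

Lemma rotexp_tr u a : (rotexp u a)^T = rotexp u (- a).
Proof.
rewrite /rotexp !linearD /= !linearZ /= trmx1 trmx_mul crossmx_tr.
by rewrite mulNmx mulmxN opprK sinN cosN scaleNr scalerN.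
Qed.

Lemma rotexp_orth u a : unit_vec u -> (rotexp u a)^T *m rotexp u a = 1%:M.
Proof. by move=> hu; rewrite rotexp_tr rotexpD // addNr rotexp0. Qed.

(* exp(a K) is a rotation: it is orthogonal, and its determinant is the
   square det(exp(a/2 K))^2 of a number whose square is 1. *)
Lemma rotexp_SO3 u a : unit_vec u -> is_SO3 (rotexp u a).
Proof.
move=> hu; split; first exact: rotexp_orth.
have -> : a = a / 2 + a / 2 by field.
by rewrite -rotexpD // det_mulmx -expr2; apply: orth_det_sqr; exact: rotexp_orth.
Qed.

Lemma rotexpX u a m : unit_vec u -> rotexp u a ^+ m = rotexp u (m%:R * a).
Proof.
move=> hu; elim: m => [|m IH]; first by rewrite expr0 mul0r rotexp0.
by rewrite exprS IH -mulmxE rotexpD // -{1}(mul1r a) -mulrDl -natr1 addrC.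
Qed.

Lemma rotexp_periodic u x k : rotexp u (x - 2 * k%:R * pi) = rotexp u x.
Proof.
suff [hs hc] : sin (x - 2 * k%:R * pi) = sin x /\ cos (x - 2 * k%:R * pi) = cos x.
  by rewrite /rotexp hs hc.
elim: k => [|k [IHs IHc]]; first by rewrite mulr0 mul0r subr0.
have -> : x - 2 * k.+1%:R * pi = (x - 2 * k%:R * pi) - pi *+ 2.
  by rewrite -natr1 mulr2n; ring.
rewrite (sinB (x - _) (pi *+ 2)) (cosB (x - _) (pi *+ 2)) sin2pi cos2pi IHs IHc.
by split; ring.
Qed.

Lemma Eroot_pow n (nh : 'rV[R]_3) (gamma : R) k : (0 < n)%N -> unit_vec nh ->
  Eroot n nh gamma k ^+ n = rotexp nh gamma.
Proof.
move=> hn hnh; rewrite /Eroot rotexpX //.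
have hn0 : (n%:R : R) != 0 by rewrite pnatr_eq0 -lt0n.
have -> : n%:R * (gamma / n%:R - 2 * k%:R * pi / n%:R) = gamma - 2 * k%:R * pi.
  by field.
exact: rotexp_periodic.
Qed.

End Rotations.

Section CycleBlocks.
Variable R : realType.

Lemma succ_mod n j : (j < n)%N ->
  (j.+1 %% n)%N = if j.+1 == n then 0%N else j.+1.
Proof.
move=> hj; case: eqP => [->|h]; first by rewrite modnn.
by rewrite modn_small //; lia.
Qed.

Lemma pred_mod n i : (i < n)%N ->
  ((i + n - 1) %% n)%N = if i == 0%N then (n - 1)%N else (i - 1)%N.
Proof.
move=> hi; case: eqP => [->|h]; first by rewrite add0n modn_small //; lia.
have -> : (i + n - 1 = (i - 1) + n)%N by lia.
by rewrite modnDr modn_small //; lia.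
Qed.

Lemma succ_pred_mod n i j : (3 <= n)%N -> (i < n)%N -> (j < n)%N ->
  (i == (j.+1 %% n)%N) = (j == ((i + n - 1) %% n)%N).
Proof.
move=> hn hi hj; rewrite succ_mod // pred_mod //.
by case: (j.+1 =P n) => ?; case: (i =P 0%N) => ?; apply/eqP/eqP; lia.
Qed.

Lemma sum_indicator n (c : nat) (P : nat -> bool) (M : 'M[R]_3) : (c < n)%N ->
  (forall k, (k < n)%N -> P k = (k == c)) ->
  \sum_(k < n) (P k)%:R *: M = M.
Proof.
move=> hc hP; rewrite (bigD1 (Ordinal hc)) //= hP // eqxx scale1r big1 ?addr0 //.
move=> k hk; rewrite hP //; case: eqP => [hkc|]; last by rewrite scale0r.
by move: hk; rewrite -val_eqE /= hkc eqxx.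
Qed.

(* For n >= 3 the diagonal, successor and predecessor positions are distinct,
   so a block of the cycle matrix with all edges equal to M splits as a sum. *)
Lemma Rblock_const_dec n (M : 'M[R]_3) i j :
  (3 <= n)%N -> (i < n)%N -> (j < n)%N ->
  Rblock n (fun _ => M) i j = (j == i)%:R *: 1%:M + (j == (i.+1 %% n)%N)%:R *: M
     + (j == ((i + n - 1) %% n)%N)%:R *: M^T.
Proof.
move=> hn hi hj; rewrite /Rblock !succ_mod // !pred_mod //.
case: (i.+1 =P n) => ?; case: (i =P 0%N) => ?; case: (j.+1 =P n) => ? /=.
all: repeat (case: eqP => ? /=).
all: try lia.
all: by rewrite ?scale1r ?scale0r ?addr0 ?add0r.
Qed.

Lemma Rblock_const_rowsum n (M : 'M[R]_3) : (3 <= n)%N -> forall i, (i < n)%N ->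
  \sum_(j < n) Rblock n (fun _ => M) i j = 1%:M + M + M^T.
Proof.
move=> hn i hi; have hn0 : (0 < n)%N by lia.
rewrite (eq_bigr _ (fun j _ => Rblock_const_dec M hn hi (ltn_ord j))).
rewrite !big_split /=.
rewrite (@sum_indicator n i (fun k => k == i)) //.
rewrite (@sum_indicator n (i.+1 %% n)%N (fun k => k == (i.+1 %% n)%N))
  ?ltn_pmod //.
by rewrite (@sum_indicator n ((i + n - 1) %% n)%N
  (fun k => k == ((i + n - 1) %% n)%N)) ?ltn_pmod.
Qed.

Lemma Rblock_const_colsum n (M : 'M[R]_3) : (3 <= n)%N -> forall j, (j < n)%N ->
  \sum_(i < n) Rblock n (fun _ => M) i j = 1%:M + M + M^T.
Proof.
move=> hn j hj; have hn0 : (0 < n)%N by lia.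
rewrite (eq_bigr _ (fun i _ => Rblock_const_dec M hn (ltn_ord i) hj)).
rewrite !big_split /=.
rewrite (@sum_indicator n j (fun k => j == k)) => [||k _]; rewrite 1?eq_sym //.
rewrite (@sum_indicator n ((j + n - 1) %% n)%N (fun k => j == (k.+1 %% n)%N))
  ?ltn_pmod //; last by move=> k hk; rewrite (succ_pred_mod hn hj hk).
rewrite (@sum_indicator n (j.+1 %% n)%N (fun k => j == ((k + n - 1) %% n)%N))
  ?ltn_pmod //.
by move=> k hk; rewrite -(succ_pred_mod hn hk hj).
Qed.

End CycleBlocks.

Section Gauge.
Variable R : realType.
Variables (n : nat) (Rt : nat -> 'M[R]_3) (E : 'M[R]_3).
Hypotheses (hn : (3 <= n)%N) (hRt : forall s, (s < n)%N -> is_SO3 (Rt s))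
  (hE : is_SO3 E) (hcyc : \prod_(0 <= s < n) Rt s = E ^+ n).

Lemma cand_SO3 i : (i <= n)%N -> is_SO3 (cand Rt E i).
Proof.
move=> hi; apply: SO3_mul; last exact: SO3_X.
by apply/SO3_tr/SO3_prod => s hs; apply: hRt; exact: leq_trans hs hi.
Qed.

Lemma cand0 : cand Rt E 0 = 1%:M.
Proof. by rewrite /cand big_geq // expr0 trmx1 mulmx1. Qed.

(* The candidate transports every edge measurement to E; on the closing edge
   (n-1, 0) this is where E^n = R~_12 ... R~_n1 is used. *)
Lemma cand_edge i : (i < n)%N ->
  (cand Rt E i)^T *m Rt i *m cand Rt E (i.+1 %% n)%N = E.
Proof.
move=> hi.
have hleft : (cand Rt E i)^T *m Rt i = (E ^+ i)^T *m \prod_(0 <= s < i.+1) Rt s.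
  by rewrite /cand trmx_mul trmxK big_nat_recr //= -mulmxA.
have hpow : (E ^+ i)^T *m E ^+ i.+1 = E.
  by rewrite exprSr -mulmxE mulmxA (proj1 (SO3_X i hE)) mul1mx.
rewrite hleft succ_mod //; case: eqP => [hin|hin].
  by rewrite cand0 mulmx1 hin hcyc -hin.
rewrite /cand mulmxA -(mulmxA _ _ (_^T)) SO3_rinv ?mulmx1 //.
by apply: SO3_prod => s hs; apply: hRt; apply: leq_trans hs _; lia.
Qed.

Lemma cand_gauge i j : (i < n)%N -> (j < n)%N ->
  (cand Rt E i)^T *m Rblock n Rt i j *m cand Rt E j = Rblock n (fun _ => E) i j.
Proof.
move=> hi hj; rewrite /Rblock.
case: (i =P j) => [<-|_]; first by rewrite mulmx1; case: (cand_SO3 (ltnW hi)).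
case: (j =P (i.+1 %% n)%N) => [->|_]; first exact: cand_edge.
case: (i =P (j.+1 %% n)%N) => [->|_]; last by rewrite mulmx0 mul0mx.
rewrite -[in RHS](cand_edge hj); move: (cand Rt E j) (cand Rt E _) => A B.
by rewrite !trmx_mul trmxK mulmxA.
Qed.

End Gauge.

Section TraceOrthogonality.
Variable R : realType.

Lemma tr_sym_skew (S W : 'M[R]_3) : S^T = S -> W^T = - W -> \tr (S *m W) = 0.
Proof.
move=> hS hW.
have h : \tr (S *m W) = - \tr (S *m W).
  by rewrite -{1}mxtrace_tr trmx_mul hW hS mulNmx mxtrace_mulC linearN.
by move: h; set x := \tr _; lra.
Qed.

Lemma balanced_skew_pairing n (G : nat -> nat -> 'M[R]_3) (S : 'M[R]_3)
    (W : nat -> 'M[R]_3) :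
  S^T = S ->
  (forall i, (i < n)%N -> \sum_(j < n) G i j = S) ->
  (forall j, (j < n)%N -> \sum_(i < n) G i j = S) ->
  (forall i, (i < n)%N -> (W i)^T = - W i) ->
  \sum_(i < n) \sum_(j < n) (\tr ((W i)^T *m G i j) + \tr (G i j *m W j)) = 0.
Proof.
move=> hS hrow hcol hW.
have hrows : \sum_(i < n) \sum_(j < n) \tr ((W i)^T *m G i j) = 0.
  apply: big1 => i _; rewrite -raddf_sum -mulmx_sumr hrow //=.
  rewrite mxtrace_mulC hW // mulmxN linearN /=.
  by rewrite (tr_sym_skew hS (hW _ _)) ?oppr0.
have hcols : \sum_(i < n) \sum_(j < n) \tr (G i j *m W j) = 0.
  rewrite exchange_big; apply: big1 => j _.
  by rewrite -raddf_sum -mulmx_suml hcol //=; exact: (tr_sym_skew hS (hW _ _)).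
rewrite (eq_bigr (fun i : 'I_n => \sum_(j < n) \tr ((W i)^T *m G i j)
                                + \sum_(j < n) \tr (G i j *m W j))) => [|i _].
  by rewrite big_split /= hrows hcols addr0.
exact: big_split.
Qed.

End TraceOrthogonality.

Section Calculus.
Variable R : realType.

Lemma is_derive_bigsum n (h : 'I_n -> R -> R) (dh : 'I_n -> R) :
  (forall i, is_derive (0 : R) (1 : R) (h i) (dh i)) ->
  is_derive (0 : R) (1 : R) (fun t => \sum_(i < n) h i t) (\sum_(i < n) dh i).
Proof. by move=> hd; rewrite -fct_sumE; apply: is_derive_sum. Qed.

Lemma is_derive_sandwich (A B : R -> 'M[R]_3) (M dA dB : 'M[R]_3) a b :
  (forall p q, is_derive (0 : R) (1 : R) (fun t => A t p q) (dA p q)) ->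
  (forall p q, is_derive (0 : R) (1 : R) (fun t => B t p q) (dB p q)) ->
  is_derive (0 : R) (1 : R) (fun t => ((A t)^T *m M *m B t) a b)
    ((dA^T *m M *m B 0 + (A 0)^T *m M *m dB) a b).
Proof.
move=> hA hB.
have -> : (fun t => ((A t)^T *m M *m B t) a b) =
    (fun t => \sum_(d < 3) (\sum_(k < 3) M k d * A t k a) * B t d b).
  apply/funext => t; rewrite !mxE; apply: eq_bigr => d _; rewrite !mxE.
  by congr (_ * _); apply: eq_bigr => k _; rewrite !mxE mulrC.
have hrow d : is_derive (0 : R) (1 : R) (fun t => \sum_(k < 3) M k d * A t k a)
    (\sum_(k < 3) M k d * dA k a).
  by apply: is_derive_bigsum => k; exact: is_deriveZ.
apply: is_derive_eq; first exact: is_derive_bigsum.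
rewrite !mxE -big_split; apply: eq_bigr => d _ /=.
by rewrite !mxE !(big_ord_recr, big_ord0) /= !mxE /GRing.scale /=; ring.
Qed.

Lemma orth_curve_tangent (c : R -> 'M[R]_3) (D : 'M[R]_3) :
  (forall t, (c t)^T *m c t = 1%:M) ->
  (forall p q, is_derive (0 : R) (1 : R) (fun t => c t p q) (D p q)) ->
  ((c 0)^T *m D)^T = - ((c 0)^T *m D).
Proof.
move=> horth hD; rewrite trmx_mul trmxK; apply/eqP; rewrite -addr_eq0; apply/eqP.
apply/matrixP => p q; have hd := is_derive_sandwich 1%:M p q hD hD.
have hconst : (fun t => ((c t)^T *m 1%:M *m c t) p q) = cst (1%:M p q : R).
  by apply/funext => t; rewrite mulmx1 horth.
rewrite hconst in hd; have := @derive_val _ _ _ _ _ _ _ hd.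
by rewrite derive_cst !mulmx1 mxE => <-; rewrite mxE.
Qed.

Lemma derive_fcost n (Rt : nat -> 'M[R]_3) (c : nat -> R -> 'M[R]_3)
    (D : nat -> 'M[R]_3) :
  (forall i p q, (i < n)%N ->
     is_derive (0 : R) (1 : R) (fun t => c i t p q) (D i p q)) ->
  is_derive (0 : R) (1 : R) (fun t => fcost n Rt (fun i => c i t))
    (- \sum_(i < n) \sum_(j < n)
         \tr ((D i)^T *m Rblock n Rt i j *m c j 0
              + (c i 0)^T *m Rblock n Rt i j *m D j)).
Proof.
move=> hD; rewrite /fcost; apply: is_deriveN.
apply: is_derive_bigsum => i; apply: is_derive_bigsum => j.
by apply: is_derive_bigsum => a; apply: is_derive_sandwich => p q; apply: hD.
Qed.

End Calculus.

Theorem lemma1 (R : realType) (n : nat) (Rt : nat -> 'M[R]_3)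
    (u : 'rV[R]_3) (theta : nat -> R) :
  (3 <= n)%N ->
  (forall s, (s < n)%N -> is_SO3 (Rt s)) ->
  unit_vec u ->
  (forall s, (s < n)%N -> Rt s = rotexp u (theta s)) ->
  forall (nh : 'rV[R]_3) (gamma : R),
    unit_vec nh -> - pi <= gamma <= pi ->
    cycle_error n Rt = rotexp nh gamma ->
  forall k : nat, (k < n)%N ->
    stationary n Rt (cand Rt (Eroot n nh gamma k)).
Proof.
move=> hn hRt _ _ nh gamma hnh _ hcyc k _.
set E := Eroot n nh gamma k.
have hE : is_SO3 E by apply: rotexp_SO3.
have hEn : \prod_(0 <= s < n) Rt s = E ^+ n.
  by rewrite -[LHS]/(cycle_error n Rt) hcyc Eroot_pow //; lia.
clearbody E; set X := cand Rt E.
have hX i : (i < n)%N -> is_SO3 (X i) by move=> hi; exact: cand_SO3 (ltnW hi).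
split=> // c hc c0 hd.
pose D i := \matrix_(p < 3, q < 3) 'D_1 (fun t => c i t p q) 0.
have hD i p q :
    (i < n)%N -> is_derive (0 : R) (1 : R) (fun t => c i t p q) (D i p q).
  by move=> hi; rewrite mxE; apply/derivableP/hd.
(* The velocity of node i is X_i W_i with W_i skew-symmetric. *)
pose W i := (X i)^T *m D i.
have hW i : (i < n)%N -> (W i)^T = - W i.
  move=> hi; rewrite /W -(c0 i hi).
  by apply: orth_curve_tangent => [t|p q]; [case: (hc i hi t) | exact: hD].
have hDW i : (i < n)%N -> D i = X i *m W i.
  by move=> hi; rewrite /W mulmxA SO3_rinv ?mul1mx //; exact: hX.
have hS : (1%:M + E + E^T)^T = 1%:M + E + E^T.
  by rewrite !linearD /= trmx1 trmxK addrAC.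
have hpair := balanced_skew_pairing hS (Rblock_const_rowsum E hn)
  (Rblock_const_colsum E hn) hW.
apply: is_derive_eq; first exact: derive_fcost.
rewrite -[RHS]oppr0; congr (- _); apply: etrans hpair.
apply: eq_bigr => i _; apply: eq_bigr => j _.
rewrite -mxtraceD -(cand_gauge hn hRt hE hEn (ltn_ord i) (ltn_ord j)).
by rewrite !c0 // !hDW // !trmx_mul !mulmxA.
Qed.
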